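(* For $k=o(n)$, $\mathsf{m}^{rd}(+\infty,S_{n,k})=\frac{1+o_k(1)}{2\sqrt{k}}$.
   Context: $S_{n,k}\in\{0,1\}^{\binom{n}{k}\times n}$ is the matrix whose rows are all the distinct vectors in $\{0,1\}^n$ with exactly $k$ ones, each appearing exactly once. For $A\in\{0,1\}^{N\times n}$ and $m\ge0$, unit vectors $U_1,\dots,U_N,V_1,\dots,V_n\in\mathbb{R}^d$ form a margin-$m$, relative-bias-$0$ embedding of $A$ if $\langle U_j,V_i\rangle\ge m$ whenever $A_{ji}=1$ and $\langle U_j,V_i\rangle\le -m$ whenever $A_{ji}=0$. $\mathsf{m}^{rd}(d,A)$ is the supremum of such $m$ in dimension $d$ ($-\infty$ if none), and $\mathsf{m}^{rd}(+\infty,A)=\sup_d\mathsf{m}^{rd}(d,A)$. *)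

From HB Require Import structures.
From mathcomp Require Import all_boot all_order all_algebra.
From mathcomp Require Import all_classical all_reals ereal.
Set Implicit Arguments. Unset Strict Implicit. Unset Printing Implicit Defensive.
Import Order.TTheory GRing.Theory Num.Theory.
Local Open Scope ring_scope.
Local Open Scope classical_set_scope.

Definition dotp (R : realType) (d : nat) (u v : 'rV[R]_d) : R :=
  \sum_(i < d) u ord0 i * v ord0 i.

(* A binary matrix with rows indexed by a finite type I and n columns
   (row order is irrelevant for the margin). true = 1, false = 0. *)
Definition is_rd_embedding (R : realType) (I : finType) (n d : nat)
    (A : I -> 'I_n -> bool) (U : I -> 'rV[R]_d) (V : 'I_n -> 'rV[R]_d) (m : R) : Prop :=
  (forall j, dotp (U j) (U j) = 1) /\ (forall i, dotp (V i) (V i) = 1) /\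
  (forall j i, if A j i then m <= dotp (U j) (V i) else dotp (U j) (V i) <= - m).

Definition m_rd (R : realType) (I : finType) (n : nat) (d : nat)
    (A : I -> 'I_n -> bool) : \bar R :=
  ereal_sup [set (m%:E)%E | m in [set m : R | 0 <= m /\
     exists U V, is_rd_embedding (d:=d) A U V m]].

Definition m_rd_inf (R : realType) (I : finType) (n : nat)
    (A : I -> 'I_n -> bool) : \bar R :=
  ereal_sup [set m_rd R d A | d in [set: nat]].

(* Rows of S_{n,k}: all k-subsets of {0..n-1}, each exactly once. *)
Definition ksubset (n k : nat) := {S : {set 'I_n} | #|S| == k}.

Definition S_mat (n k : nat) : ksubset n k -> 'I_n -> bool :=
  fun S i => i \in val S.

From mathcomp Require Import all_boot all_order all_algebra.
From mathcomp Require Import all_classical all_reals ereal.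
From mathcomp Require Import fingroup perm ring lra.
Set Implicit Arguments. Unset Strict Implicit. Unset Printing Implicit Defensive.
Import Order.TTheory GRing.Theory Num.Theory.
Local Open Scope ring_scope.

(* For a k-set S let w_S = (n-k) 1_S - k 1 be its centered indicator and
   W_S = sum_i w_S(i) V_i.  A margin-m embedding gives <U_S, W_S> >= 2k(n-k)m,
   hence |W_S|^2 >= (2k(n-k)m)^2 since |U_S| = 1.  The matrix
   sum_S w_S(i) w_S(j) is invariant under permutations of the columns, hence
   constant off the diagonal, and since sum_i w_S(i) = 0 that constant is
   -1/(n-1) times the diagonal one; as |sum_i V_i|^2 >= 0 this bounds
   sum_S |W_S|^2 and yields 4k(n-k)(n-1)m^2 <= n^2.
   Conversely U_S = (c 1_S / sqrt k, -s), V_i = (c e_i, s) with s^2 = m,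
   c^2 = 1 - m embed S_{n,k} with margin m = 1/(1 + 2 sqrt k).  Both bounds are
   (1 + o(1))/(2 sqrt k) when k -> oo and k/n -> 0. *)

Section Dotp.
Variable R : realType.

Lemma dotpC d (u v : 'rV[R]_d) : dotp u v = dotp v u.
Proof. by apply: eq_bigr => i _; rewrite mulrC. Qed.

Lemma dotp_ge0 d (u : 'rV[R]_d) : 0 <= dotp u u.
Proof. by apply: sumr_ge0 => i _; rewrite -expr2 sqr_ge0. Qed.

Lemma dotp_sumr d (I : finType) (u : 'rV[R]_d) (a : I -> R) (v : I -> 'rV[R]_d) :
  dotp u (\sum_i a i *: v i) = \sum_i a i * dotp u (v i).
Proof.
rewrite /dotp; under eq_bigr => j _ do rewrite summxE mulr_sumr.
rewrite exchange_big /=; apply: eq_bigr => i _.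
by rewrite mulr_sumr; apply: eq_bigr => j _; rewrite mxE mulrCA.
Qed.

Lemma dotp_sum_sum d (I : finType) (a : I -> R) (v : I -> 'rV[R]_d) :
  dotp (\sum_i a i *: v i) (\sum_i a i *: v i) =
  \sum_i \sum_j a i * a j * dotp (v i) (v j).
Proof.
rewrite dotp_sumr; apply: eq_bigr => j _.
rewrite dotpC dotp_sumr mulr_sumr; apply: eq_bigr => i _.
by rewrite dotpC mulrCA mulrA [a j * _]mulrC.
Qed.

Lemma sqr_le_dotp d (u w : 'rV[R]_d) (a : R) :
  dotp u u = 1 -> 0 <= a -> a <= dotp u w -> a ^+ 2 <= dotp w w.
Proof.
move=> uu a0 auw.
have : 0 <= a ^+ 2 * dotp u u - 2 * a * dotp u w + dotp w w.
  have -> : a ^+ 2 * dotp u u - 2 * a * dotp u w + dotp w w =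
      \sum_i (a * u ord0 i - w ord0 i) ^+ 2.
    rewrite /dotp !mulr_sumr -sumrN -!big_split /=; apply: eq_bigr => i _.
    by rewrite sqrrB; ring.
  by apply: sumr_ge0 => i _; rewrite sqr_ge0.
rewrite uu; nra.
Qed.

Lemma dotp_row_mx p q (a a' : 'rV[R]_p) (b b' : 'rV[R]_q) :
  dotp (row_mx a b) (row_mx a' b') = dotp a a' + dotp b b'.
Proof.
rewrite /dotp big_split_ord /=; congr (_ + _); apply: eq_bigr => j _.
  by rewrite !row_mxEl.
by rewrite !row_mxEr.
Qed.

Lemma dotp_row1 (x y : R) : dotp (\row_(j < 1) x) (\row_(j < 1) y) = x * y.
Proof. by rewrite /dotp big_ord1 !mxE. Qed.

End Dotp.

Section IndexSums.
Variables (R : realType) (n : nat).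

Lemma sum_if_in (A : {set 'I_n}) (a b : R) :
  \sum_i (if i \in A then a else b) = a * #|A|%:R + b * (n - #|A|)%:R.
Proof.
rewrite (bigID (mem A)) /=.
rewrite (eq_bigr (fun _ => a)) => [|i ->] //.
rewrite [X in _ + X](eq_bigr (fun _ => b)) => [|i /negbTE ->] //.
rewrite !sumr_const !mulr_natr; congr (_ + b *+ _).
have -> : #|[pred i | i \notin A]| = #|~: A| by apply: eq_card => i; rewrite !inE.
by rewrite -{1}(addKn #|A| #|~: A|) cardsC card_ord.
Qed.

Lemma sum_sum_offdiag_const (M F : 'I_n -> 'I_n -> R) (b : R) :
  (forall i j, i != j -> M i j = b) ->
  \sum_i \sum_j M i j * F i j =
  \sum_i M i i * F i i + b * (\sum_i \sum_j F i j - \sum_i F i i).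
Proof.
move=> Mb; rewrite -sumrB mulr_sumr -big_split /=; apply: eq_bigr => i _.
rewrite (bigD1 i) //= [\sum_j F i j](bigD1 i) //= [F i i + _]addrC addrK.
by congr (_ + _); rewrite mulr_sumr; apply: eq_bigr => j ji; rewrite Mb // eq_sym.
Qed.

End IndexSums.

Lemma perm_pair_exists n (i j i' j' : 'I_n) : i != j -> i' != j' ->
  exists s : {perm 'I_n}, s i = i' /\ s j = j'.
Proof.
move=> ij ij'; set t := tperm i i'.
have tj : i' != t j by rewrite -[i'](tpermL i i') (inj_eq perm_inj).
by exists (t * tperm (t j) j')%g; rewrite !permM tpermL tpermD 1?eq_sym // tpermL.
Qed.

Lemma perm_invariant_offdiag (T : Type) n (M : 'I_n -> 'I_n -> T) :
  (forall (s : {perm 'I_n}) i j, M (s i) (s j) = M i j) ->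
  forall i j i' j', i != j -> i' != j' -> M i j = M i' j'.
Proof.
move=> Ms i j i' j' ij ij'; by have [s [<- <-]] := perm_pair_exists ij ij'.
Qed.

Section CenteredIndicator.
Variables (R : realType) (n k : nat).

Definition centered_ind (S : ksubset n k) (i : 'I_n) : R :=
  if i \in val S then n%:R - k%:R else - k%:R.

Definition centered_gram (i j : 'I_n) : R :=
  \sum_(S : ksubset n k) centered_ind S i * centered_ind S j.

Lemma card_ksubset_perm (s : {perm 'I_n}) (S : ksubset n k) : #|s @: val S| == k.
Proof. by rewrite card_imset ?(valP S) //; exact: perm_inj. Qed.

Definition ksubset_perm (s : {perm 'I_n}) (S : ksubset n k) : ksubset n k :=
  exist _ (s @: val S) (card_ksubset_perm s S).

Lemma ksubset_perm_inj s : injective (ksubset_perm s).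
Proof.
move=> S S' /(congr1 val) /(imset_inj (@perm_inj _ s)) eqS.
exact: val_inj.
Qed.

Lemma centered_gram_perm (s : {perm 'I_n}) i j :
  centered_gram (s i) (s j) = centered_gram i j.
Proof.
rewrite /centered_gram (reindex_inj (ksubset_perm_inj (s:=s))); apply: eq_bigr => S _.
by rewrite /centered_ind /= !mem_imset //; exact: perm_inj.
Qed.

Hypothesis k_le_n : (k <= n)%N.

Lemma sum_centered_ind S : \sum_i centered_ind S i = 0.
Proof. by rewrite sum_if_in (eqP (valP S)) natrB //; ring. Qed.

Lemma sum_centered_ind_sqr S :
  \sum_i centered_ind S i ^+ 2 = k%:R * (n%:R - k%:R) * n%:R.
Proof.
under eq_bigr => i _ do rewrite /centered_ind (fun_if (fun x => x ^+ 2)).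
by rewrite sum_if_in (eqP (valP S)) natrB //; ring.
Qed.

Lemma sum_centered_gram : \sum_i \sum_j centered_gram i j = 0.
Proof.
under eq_bigr => i _ do rewrite exchange_big /=.
rewrite exchange_big /=; apply: big1 => S _.
under eq_bigr => i _ do rewrite -mulr_sumr sum_centered_ind mulr0.
by rewrite big1.
Qed.

Lemma trace_centered_gram :
  \sum_i centered_gram i i = #|{: ksubset n k}|%:R * (k%:R * (n%:R - k%:R) * n%:R).
Proof.
rewrite mulr_natl -sumr_const exchange_big /=; apply: eq_bigr => S _.
by rewrite -(sum_centered_ind_sqr S); apply: eq_bigr => i _; rewrite expr2.
Qed.

Lemma centered_gram_offdiag i j : i != j ->
  (n%:R - 1) * centered_gram i j = - (#|{: ksubset n k}|%:R * (k%:R * (n%:R - k%:R))).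
Proof.
move=> ij; have n_gt0 : 0 < n%:R :> R by rewrite ltr0n (leq_ltn_trans _ (ltn_ord i)).
have offdiag i' j' : i' != j' -> centered_gram i' j' = centered_gram i j.
  by move=> ij'; apply: perm_invariant_offdiag ij' ij; exact: centered_gram_perm.
have := sum_sum_offdiag_const (fun _ _ => 1) offdiag.
under eq_bigr => i' _ do under eq_bigr => j' _ do rewrite mulr1.
under [X in _ = X + _ -> _]eq_bigr => i' _ do rewrite mulr1.
rewrite sum_centered_gram trace_centered_gram !sumr_const !card_ord -mulr_natl => h.
by apply: (mulfI (lt0r_neq0 n_gt0)); lra.
Qed.

Lemma card_ksubset_gt0 : (0 < #|{: ksubset n k}|)%N.
Proof.
rewrite card_sig.
have -> : #|[pred A : {set 'I_n} | #|A| == k]| = #|[set A : {set 'I_n} | #|A| == k]|.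
  by apply: eq_card => A; rewrite !inE.
by rewrite card_draws card_ord bin_gt0.
Qed.

End CenteredIndicator.
Arguments centered_ind {R n k}.
Arguments centered_gram {R n} k.

Section UpperBound.
Variables (R : realType) (n k d : nat).
Variables (U : ksubset n k -> 'rV[R]_d) (V : 'I_n -> 'rV[R]_d).

Definition centered_sum (S : ksubset n k) : 'rV[R]_d :=
  \sum_i centered_ind S i *: V i.

Lemma sum_dotp_centered_sum :
  \sum_S dotp (centered_sum S) (centered_sum S) =
  \sum_i \sum_j centered_gram k i j * dotp (V i) (V j).
Proof.
under eq_bigr => S _ do rewrite dotp_sum_sum.
rewrite exchange_big; apply: eq_bigr => i _.
rewrite exchange_big; apply: eq_bigr => j _.
by rewrite mulr_suml.
Qed.

Hypotheses (k_gt0 : (0 < k)%N) (k_lt_n : (k < n)%N).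

Lemma sum_dotp_centered_sum_le : (forall i, dotp (V i) (V i) = 1) ->
  (n%:R - 1) * \sum_S dotp (centered_sum S) (centered_sum S) <=
  #|{: ksubset n k}|%:R * (k%:R * (n%:R - k%:R)) * n%:R ^+ 2.
Proof.
move=> hV; have k_le_n := ltnW k_lt_n.
set c := _ * (k%:R * _).
have n1_gt0 : 0 < n%:R - 1 :> R by rewrite subr_gt0 ltr1n (leq_ltn_trans k_gt0).
have offdiag (i j : 'I_n) : i != j -> centered_gram k i j = - c / (n%:R - 1).
  by move=> ij; rewrite -(centered_gram_offdiag R k_le_n ij) [RHS]mulrC mulKf ?gt_eqF.
have sumV_ge0 : 0 <= \sum_i \sum_j dotp (V i) (V j).
  have := dotp_ge0 (\sum_i 1 *: V i); rewrite dotp_sum_sum.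
  by under eq_bigr => i _ do under eq_bigr => j _ do rewrite !mul1r.
rewrite sum_dotp_centered_sum (sum_sum_offdiag_const _ offdiag).
under eq_bigr => i _ do rewrite hV mulr1.
under [X in _ + _ * (_ - X)]eq_bigr => i _ do rewrite hV.
rewrite trace_centered_gram // sumr_const card_ord.
have : (n%:R - 1) * (- c / (n%:R - 1)) = - c by rewrite mulrC divfK ?gt_eqF.
move: (- c / _) => b hb.
have c_ge0 : 0 <= c by rewrite /c !mulr_ge0 // subr_ge0 ler_nat.
have := mulr_ge0 c_ge0 sumV_ge0.
rewrite /c in hb c_ge0 *; nra.
Qed.

Variable m : R.
Hypotheses (m_ge0 : 0 <= m) (emb : is_rd_embedding (@S_mat n k) U V m).

Lemma margin_le_dotp_centered_sum S :
  2 * k%:R * (n%:R - k%:R) * m <= dotp (U S) (centered_sum S).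
Proof.
have [_ [_ hUV]] := emb.
have k_le_n := ltnW k_lt_n.
rewrite dotp_sumr.
have -> : 2 * k%:R * (n%:R - k%:R) * m =
    \sum_i (if i \in val S then (n%:R - k%:R) * m else k%:R * m).
  by rewrite sum_if_in (eqP (valP S)) natrB //; ring.
apply: ler_sum => i _; have := hUV S i; rewrite /S_mat /centered_ind.
case: (i \in val S) => h; first by rewrite ler_wpM2l // subr_ge0 ler_nat.
by rewrite mulNr -mulrN ler_wpM2l // lerNr.
Qed.

Lemma margin_upper_bound :
  4 * k%:R * (n%:R - k%:R) * (n%:R - 1) * m ^+ 2 <= n%:R ^+ 2.
Proof.
have [hU [hV _]] := emb.
set a := 2 * k%:R * (n%:R - k%:R) * m.
have c_gt0 : 0 < k%:R * (n%:R - k%:R) :> R.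
  by rewrite mulr_gt0 ?ltr0n // subr_gt0 ltr_nat.
have N_gt0 : 0 < #|{: ksubset n k}|%:R :> R by rewrite ltr0n card_ksubset_gt0 // ltnW.
have n1_ge0 : 0 <= n%:R - 1 :> R by rewrite subr_ge0 ler1n (leq_trans k_gt0) // ltnW.
have a_sqr : #|{: ksubset n k}|%:R * a ^+ 2 <= \sum_S dotp (centered_sum S) (centered_sum S).
  rewrite mulr_natl -sumr_const; apply: ler_sum => S _.
  apply: sqr_le_dotp (hU S) _ (margin_le_dotp_centered_sum S).
  by rewrite /a !mulr_ge0 // subr_ge0 ler_nat ltnW.
have := ler_wpM2l n1_ge0 a_sqr.
move/le_trans/(_ (sum_dotp_centered_sum_le hV)).
rewrite mulrCA -[X in _ <= X]mulrA ler_pM2l // => h.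
by rewrite -(ler_pM2l c_gt0); move: h; rewrite /a; lra.
Qed.

End UpperBound.

Section LowerBound.
Variable R : realType.

Lemma mul_if0 (b : bool) (x y : R) :
  (if b then x else 0) * (if b then y else 0) = if b then x * y else 0.
Proof. by case: b; rewrite ?mul0r. Qed.

Lemma sum_mul_if_set1 n (A : {set 'I_n}) (i : 'I_n) (x y : R) :
  \sum_j (if j \in A then x else 0) * (if j \in [set i] then y else 0) =
  if i \in A then x * y else 0.
Proof.
rewrite (bigD1 i) //= big1 ?addr0 => [|j /negbTE ji]; last by rewrite inE ji mulr0.
by rewrite inE eqxx; case: (i \in A); rewrite ?mul0r.
Qed.

Lemma S_mat_embedding n k : (0 < k)%N -> (k <= n)%N ->
  exists U V, is_rd_embedding (d := (n + 1)%N) (@S_mat n k) U V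
    (1 / (1 + 2 * Num.sqrt (k%:R : R))).
Proof.
move=> k_gt0 k_le_n.
set r := Num.sqrt (k%:R : R); set m := 1 / (1 + 2 * r).
have r_gt0 : 0 < r by rewrite sqrtr_gt0 ltr0n.
have rr : r ^+ 2 = k%:R by rewrite sqr_sqrtr // ler0n.
have m_gt0 : 0 < m by rewrite divr_gt0 //; lra.
have m_le1 : m <= 1 by rewrite ler_pdivrMr; lra.
have mr : 1 - m = 2 * m * r.
  have : m * (1 + 2 * r) = 1 by rewrite /m mul1r mulVf //; lra.
  by rewrite mulrDr mulr1; lra.
set s := Num.sqrt m; set c := Num.sqrt (1 - m).
have ss : s ^+ 2 = m by rewrite sqr_sqrtr // ltW.
have cc : c ^+ 2 = 1 - m by rewrite sqr_sqrtr // subr_ge0.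
pose U (S : ksubset n k) : 'rV[R]_(n + 1) :=
  row_mx (\row_j if j \in val S then c / r else 0) (\row_(j < 1) - s).
pose V (i : 'I_n) : 'rV[R]_(n + 1) :=
  row_mx (\row_j if j \in [set i] then c else 0) (\row_(j < 1) s).
exists U, V; split; [|split].
- move=> S; rewrite dotp_row_mx dotp_row1 /dotp.
  under eq_bigr => j _ do rewrite !mxE mul_if0.
  rewrite sum_if_in (eqP (valP S)) mul0r addr0 mulrNN -!expr2 ss expr_div_n cc rr.
  by rewrite mulfVK ?lt0r_neq0 ?ltr0n //; lra.
- move=> i; rewrite dotp_row_mx dotp_row1 /dotp.
  under eq_bigr => j _ do rewrite !mxE mul_if0.
  by rewrite sum_if_in cards1 mul0r addr0 mulr1 -!expr2 cc ss; lra.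
- move=> S i; rewrite dotp_row_mx dotp_row1 /dotp /S_mat.
  under eq_bigr => j _ do rewrite !mxE.
  rewrite sum_mul_if_set1 mulNr -expr2 ss; case: (i \in val S); last by lra.
  by rewrite mulrAC -expr2 cc mr mulfK ?lt0r_neq0 //; lra.
Qed.

End LowerBound.

Section Supremum.
Variables (R : realType) (I : finType) (n : nat) (A : I -> 'I_n -> bool).

Lemma m_rd_inf_le (B : R) :
  (forall d U V m, 0 <= m -> is_rd_embedding (d := d) A U V m -> m <= B) ->
  (m_rd_inf R A <= B%:E)%E.
Proof.
move=> hB; apply: ge_ereal_sup => _ [d _ <-].
by apply: ge_ereal_sup => _ [m [m_ge0 [U [V emb]]] <-]; rewrite lee_fin (hB d U V).
Qed.

Lemma m_rd_inf_ge d U V (m : R) :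
  0 <= m -> is_rd_embedding (d := d) A U V m -> (m%:E <= m_rd_inf R A)%E.
Proof.
move=> m_ge0 emb; apply: (@le_trans _ _ (m_rd R d A)).
  by apply: ereal_sup_ubound; exists m => //; split => //; exists U, V.
by apply: ereal_sup_ubound; exists d.
Qed.

End Supremum.

Lemma ereal_between (R : realType) (x : \bar R) (a b : R) :
  (a%:E <= x)%E -> (x <= b%:E)%E -> exists2 y : R, x = y%:E & a <= y <= b.
Proof. by case: x => [y | | ] //=; rewrite !lee_fin => ay yb; exists y; rewrite ?ay. Qed.

Section Asymptotics.
Variable R : realType.

Lemma margin_le_of_sparse (k n e m : R) :
  1 <= k -> 0 < e -> k * (1 + e) <= e * n -> 0 <= m ->
  4 * k * (n - k) * (n - 1) * m ^+ 2 <= n ^+ 2 -> m <= (1 + e) / (2 * Num.sqrt k).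
Proof.
move=> k_ge1 e_gt0 sparse m_ge0 hm.
have r_gt0 : 0 < Num.sqrt k by rewrite sqrtr_gt0; lra.
have rr : Num.sqrt k ^+ 2 = k by rewrite sqr_sqrtr //; lra.
have n_gt0 : 0 < n by nra.
have n_k : n <= (n - k) * (1 + e) by nra.
have n_1 : n <= (n - 1) * (1 + e) by nra.
have n_sqr : n ^+ 2 <= (n - k) * (n - 1) * (1 + e) ^+ 2.
  by have := ler_pM (ltW n_gt0) (ltW n_gt0) n_k n_1; nra.
have nkn1 : 0 < (n - k) * (n - 1) by apply: mulr_gt0; nra.
have hk : 4 * k * m ^+ 2 <= (1 + e) ^+ 2 by rewrite -(ler_pM2l nkn1); nra.
rewrite ler_pdivlMr ?mulr_gt0 //.
have : (m * (2 * Num.sqrt k)) ^+ 2 <= (1 + e) ^+ 2 by rewrite !exprMn rr; nra.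
have : 0 < m * (2 * Num.sqrt k) + (1 + e) by nra.
nra.
Qed.

Lemma margin_ge_of_large (k e m : R) :
  0 < e -> 1 / e ^+ 2 < k -> 1 / (1 + 2 * Num.sqrt k) <= m ->
  1 - e <= 2 * Num.sqrt k * m.
Proof.
move=> e_gt0 k_large hm.
have k_gt0 : 0 < k by apply: le_lt_trans k_large; rewrite divr_ge0 ?sqr_ge0.
have r_gt0 : 0 < Num.sqrt k by rewrite sqrtr_gt0.
have re : 1 < Num.sqrt k * e.
  have re_gt0 : 0 < Num.sqrt k * e by rewrite mulr_gt0.
  have : 1 < (Num.sqrt k * e) ^+ 2.
    by rewrite exprMn sqr_sqrtr ?ltW // -ltr_pdivrMr ?exprn_gt0.
  nra.
move: hm; rewrite ler_pdivrMr; [nra | lra].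
Qed.

End Asymptotics.

Theorem corollary1p1 (R : realType) :
  forall eps : R, 0 < eps ->
  exists (K : nat) (delta : R), 0 < delta /\
    forall n k : nat, (K <= k)%N -> k%:R <= delta * n%:R ->
      exists m : R, (m_rd_inf R (@S_mat n k)) = (m%:E)%E /\
        `| 2 * Num.sqrt (k%:R) * m - 1 | <= eps.
Proof.
move=> e e_gt0.
exists (Num.Def.archi_bound (1 / e ^+ 2)).+1, (e / (1 + e)).
split=> [|n k k_large k_sparse]; first by rewrite divr_gt0 //; lra.
have k_gt0 : (0 < k)%N := leq_trans (ltn0Sn _) k_large.
have k_ge1 : 1 <= k%:R :> R by rewrite ler1n.
have {}k_sparse : k%:R * (1 + e) <= e * n%:R.
  by move: k_sparse; rewrite mulrAC ler_pdivlMr //; lra.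
have k_lt_n : (k < n)%N by rewrite -(ltr_nat R); nra.
have {}k_large : 1 / e ^+ 2 < k%:R.
  apply: lt_le_trans (archi_boundP _) _; first by rewrite divr_ge0 ?sqr_ge0.
  by rewrite ler_nat ltnW.
have ub : (m_rd_inf R (@S_mat n k) <= ((1 + e) / (2 * Num.sqrt k%:R))%:E)%E.
  apply: m_rd_inf_le => d U V m m_ge0 emb.
  apply: (margin_le_of_sparse k_ge1 e_gt0 k_sparse m_ge0).
  exact: (margin_upper_bound k_gt0 k_lt_n m_ge0 emb).
have lb : ((1 / (1 + 2 * Num.sqrt k%:R))%:E <= m_rd_inf R (@S_mat n k))%E.
  have [U [V emb]] := S_mat_embedding R k_gt0 (ltnW k_lt_n).
  apply: m_rd_inf_ge emb; rewrite divr_ge0 // addr_ge0 ?mulr_ge0 ?sqrtr_ge0 //.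
have [x -> /andP[x_lb x_ub]] := ereal_between lb ub.
exists x; split => //; rewrite ler_norml; apply/andP; split.
  by have := margin_ge_of_large e_gt0 k_large x_lb; lra.
have r_gt0 : 0 < Num.sqrt k%:R :> R by rewrite sqrtr_gt0 ltr0n.
by move: x_ub; rewrite ler_pdivlMr ?mulr_gt0 //; lra.
Qed.
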